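(* Let $(W_i',X_i,Y_i)'$, $i=1,2,\ldots$, be i.i.d. draws from a population $F_{W,X,Y}$, where $W$ is a vector of controls with support $\mathbb{W}$, $X$ is a scalar policy variable and $Y$ a scalar outcome, with $\mathbb{E}[Y^2\mid W=w]<\infty$ and $\mathbb{E}[X^2\mid W=w]<\infty$ for all $w\in\mathbb{W}$. Let $e_0(w)=\mathbb{E}[X\mid W=w]$, $v_0(w)=\mathbb{V}(X\mid W=w)$, and assume there is $\kappa>0$ with $v_0(w)\geq\kappa$ for all $w\in\mathbb{W}$. Let $b_0(w)=v_0(w)^{-1}\mathbb{C}(X,Y\mid W=w)$ and $\beta_0=\mathbb{E}[b_0(W)]$. Assume: (i) $X$ is a continuous random variable with bounded support $\mathbb{X}=[\underline{x},\overline{x}]$; (ii) the conditional density $f_{X\mid W}(x\mid w)$ is bounded and bounded away from zero on $\mathbb{W}\times\mathbb{X}$; (iii) $Y=h(X,U)$ where $h(x,u)$ is continuously differentiable in $x$ for all $(x,u)\in\mathbb{X}\times\mathbb{U}$ ($\mathbb{U}$ the support of $U$) and $h(\underline{x},u)$ is finite for all $u\in\mathbb{U}$; (iv) $U$ is conditionally independent of $X$ given $W=w$ for all $w\in\mathbb{W}$. Then $$\beta_0=\mathbb{E}\left[\omega(W,X)\frac{\partial h(X,U)}{\partial x}\right],$$ where, with $F_{X\mid W}$ the conditional CDF of $X$ given $W$, $$\omega(w,x)=\frac{1}{f_{X\mid W}(x\mid w)}\,\frac{\mathbb{E}[X-e_0(W)\mid W=w,X\geq x]\,(1-F_{X\mid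 W}(x\mid w))}{\int_{\underline{x}}^{\overline{x}}\mathbb{E}[X-e_0(W)\mid W=w,X\geq v]\,(1-F_{X\mid W}(v\mid w))\,\mathrm{d}v}.$$
   Context: $\mathbb{C}(\cdot,\cdot\mid W=w)$ and $\mathbb{V}(\cdot\mid W=w)$ denote conditional covariance and variance given $W=w$. *)

From HB Require Import structures.
From mathcomp Require Import all_boot all_order all_algebra.
From mathcomp Require Import all_classical all_reals all_analysis.
Set Implicit Arguments. Unset Strict Implicit. Unset Printing Implicit Defensive.
Import Order.TTheory GRing.Theory Num.Theory.
Import numFieldNormedType.Exports.
Local Open Scope classical_set_scope.
Local Open Scope ring_scope.

(* W : TW with law mu;  given W = w, X has Lebesgue
   density f w supported on [a,b] and U has law nu w, with X and U
   conditionally independent given W (assumption (iv)); Y = h X U.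
   Hence the conditional expectation of g(X,U) given W = w is the
   integral of g against (f w x dx) (x) (nu w). *)
Section Model.
Context {R : realType} {dW dU : measure_display}
  {TW : measurableType dW} {TU : measurableType dU}.
Variables (a b : R) (f : TW -> R -> R) (nu : R.-pker TW ~> TU).

Definition condEe (g : R -> TU -> R) (w : TW) : \bar R :=
  (\int[nu w]_u \int[lebesgue_measure]_(x in `[a, b]) (g x u * f w x)%:E)%E.

Definition condE (g : R -> TU -> R) (w : TW) : R := fine (condEe g w).

Definition e0 (w : TW) : R := condE (fun x _ => x) w.

Definition v0 (w : TW) : R := condE (fun x _ => (x - e0 w) ^+ 2) w.

Definition covXY (h : R -> TU -> R) (w : TW) : R :=
  condE (fun x u => (x - e0 w) * (h x u - condE h w)) w.

Definition b0 (h : R -> TU -> R) (w : TW) : R := (v0 w)^-1 * covXY h w.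

Definition cdfXW (w : TW) (x : R) : R := condE (fun t _ => (if t <= x then 1 else 0)) w.

(* E[X - e_0(W) | W = w, X >= x]
   = E[(X - e_0(w)) 1{X >= x} | W = w] / P(X >= x | W = w) *)
Definition condE_tail (w : TW) (x : R) : R :=
  condE (fun t _ => (t - e0 w) * (if x <= t then 1 else 0)) w /
  condE (fun t _ => (if x <= t then 1 else 0)) w.

Definition omega_num (w : TW) (x : R) : R := condE_tail w x * (1 - cdfXW w x).

Definition omega (w : TW) (x : R) : R :=
  (f w x)^-1 *
  (omega_num w x / Rintegral lebesgue_measure `[a, b] (omega_num w)).

End Model.

From HB Require Import structures.
From mathcomp Require Import all_boot all_order all_algebra.
From mathcomp Require Import all_classical all_reals all_analysis.
From mathcomp Require Import measurable_realfun.
From mathcomp Require Import ring lra.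
Import Order.TTheory GRing.Theory Num.Theory.
Import numFieldNormedType.Exports.
Local Open Scope classical_set_scope.
Local Open Scope ring_scope.

(* Fix w and write p for the density of X given W = w and m = e0 w.  The
   numerator of omega is G(x) = E[(X - m) 1{X >= x} | W = w].  Exchanging the
   integrals over the triangle {x <= t} and applying the fundamental theorem
   of calculus, for every C^1 function H on [a, b]
     int_a^b G(x) H'(x) dx = E[(X - m) (H(X) - H(a)) | W = w] = C(X, H(X) | W = w),
   because E[X - m | W = w] = 0.  With H = id this identifies the denominator
   of omega with v0 w; with H = h(., u), integrated in u against the law of U
   given W = w (independent of X by (iv)), it yields
   b0 w = E[omega(W, X) dh(X, U) | W = w].  Integrating over W concludes. *)

Section integral_off_null.
Context {d} {T : measurableType d} {R : realType} (mu : {measure set T -> \bar R}).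
Variable N : set T.
Hypotheses (mN : measurable N) (N0 : mu N = 0%E).
Local Open Scope ereal_scope.
Import HBNNSimple.

(* No measurability is needed: a simple function below [f] may be cut off on
   [N] without changing its integral. *)
Lemma ge0_le_integral_off_null (f g : T -> \bar R) :
  (forall x, 0 <= f x) -> (forall x, 0 <= g x) -> (forall x, ~ N x -> f x <= g x) ->
  \int[mu]_x f x <= \int[mu]_x g x.
Proof.
move=> f0 g0 fg; rewrite (ge0_integralTE _ f0) (ge0_integralTE _ g0).
apply/ge_ereal_sup => /= _ -[s /= sf <-].
have mNC : measurable (~` N) by exact: measurableC.
pose s' := proj_nnsfun s mNC.
have -> : sintegral mu s = sintegral mu s'.
  have sE (k : {nnsfun T >-> R}) : sintegral mu k = \int[mu]_x (k x)%:E.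
    by rewrite integral_nnsfun// patch_setT.
  rewrite !sE; apply: ae_eq_integral => //;
    try by apply/measurable_EFinP; exact: measurable_funTS.
  exists N; split => // x /= sx; apply: contrapT => Nx; apply: sx => _.
  by rewrite mindicE mem_set ?mulr1.
apply: ereal_sup_ubound; exists s' => //= x; rewrite mindicE.
case: (boolP (x \in ~` N)) => [/set_mem Nx|_]; last by rewrite mulr0.
by rewrite mulr1 (le_trans (sf x) (fg x Nx)).
Qed.

Lemma eq_integral_off_null (D : set T) (f g : T -> \bar R) :
  (forall x, D x -> ~ N x -> f x = g x) ->
  \int[mu]_(x in D) f x = \int[mu]_(x in D) g x.
Proof.
move=> fg; rewrite integral_mkcond [RHS]integral_mkcond integralE [RHS]integralE.
have fgD x : ~ N x -> (f \_ D) x = (g \_ D) x.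
  by move=> Nx; rewrite !patchE; case: ifPn => // /set_mem Dx; rewrite fg.
by congr (_ - _); apply/eqP; rewrite eq_le;
  apply/andP; split; apply: ge0_le_integral_off_null => // x /fgD;
  rewrite ?funeposE ?funenegE => ->.
Qed.

End integral_off_null.

Lemma measure_setC_eq0 {d} {T : measurableType d} {R : realType}
    (m : {measure set T -> \bar R}) (S : set T) :
  measurable S -> m setT = 1%E -> m S = 1%E -> m (~` S) = 0%E.
Proof.
move=> mS mT mS1; have mTf : (m setT < +oo)%E by rewrite mT ltry.
rewrite -setTD (measureD measurableT mS mTf) setTI.
by rewrite -(@subee _ 1%E)//; congr (_ - _)%E.
Qed.

Lemma measurable_fun_param_integral {d1 d2} {T1 : measurableType d1}
    {T2 : measurableType d2} {R : realType}
    (m : {sigma_finite_measure set T2 -> \bar R}) (D : set T2) (k : T1 * T2 -> R) :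
  measurable D -> measurable_fun setT k ->
  measurable_fun setT (fun x => (\int[m]_(y in D) (k (x, y))%:E)%E).
Proof.
move=> mD mk.
pose K p := (k p * \1_D p.2)%:E.
have -> : (fun x => (\int[m]_(y in D) (k (x, y))%:E)%E) = fubini_F m K.
  apply/funext => x; rewrite /fubini_F [LHS]integral_mkcond; apply: eq_integral => y _.
  by rewrite /K patchE indicE; case: ifPn; rewrite ?mulr1 ?mulr0.
have -> : fubini_F m K = fun x => (fubini_F m K^\+ x - fubini_F m K^\- x)%E.
  apply/funext => x; rewrite /fubini_F [LHS]integralE.
  by congr (_ - _)%E; apply: eq_integral => y _; rewrite ?funeposE ?funenegE.
have mK : measurable_fun setT K.
  apply/measurable_EFinP; apply: measurable_funM => //.
  by apply: measurableT_comp; [exact: measurable_indic|exact: measurable_snd].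
by apply: emeasurable_funB; apply: measurable_fun_fubini_tonelli_F => //;
  [exact: measurable_funepos|exact: measurable_funeneg].
Qed.

Lemma normrM_le_sqr {R : realDomainType} (p q : R) : `|p * q| <= p ^+ 2 + q ^+ 2.
Proof.
rewrite normrM -(real_normK (num_real p)) -(real_normK (num_real q)).
apply: le_trans (leif_mean_square_scaled `|p| `|q|).
by rewrite mulr2n lerDl mulr_ge0.
Qed.

Section Rintegral_bounds.
Context {d} {T : measurableType d} {R : realType} (mu : {measure set T -> \bar R}).
Variable D : set T.
Hypothesis mD : measurable D.

Lemma integral_EFin_Rintegral (F : T -> R) : mu.-integrable D (EFin \o F) ->
  (\int[mu]_(x in D) (F x)%:E)%E = (\int[mu]_(x in D) F x)%:E.
Proof. by move=> iF; rewrite fineK//; exact: integrable_fin_num. Qed.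

Lemma integrableZl_EFin (c : R) (F : T -> R) : mu.-integrable D (EFin \o F) ->
  mu.-integrable D (EFin \o (fun x => c * F x)).
Proof.
by move=> /(integrableZl mD c); apply: eq_integrable => // x _; rewrite /= EFinM.
Qed.

Lemma integrableD_EFin (F G : T -> R) :
  mu.-integrable D (EFin \o F) -> mu.-integrable D (EFin \o G) ->
  mu.-integrable D (EFin \o (fun x => F x + G x)).
Proof.
by move=> iF iG; apply: eq_integrable (integrableD mD iF iG) => // x _; rewrite /= EFinD.
Qed.

Lemma integrableB_EFin (F G : T -> R) :
  mu.-integrable D (EFin \o F) -> mu.-integrable D (EFin \o G) ->
  mu.-integrable D (EFin \o (fun x => F x - G x)).
Proof.
by move=> iF iG; apply: eq_integrable (integrableB mD iF iG) => // x _; rewrite /= EFinB.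
Qed.

Lemma normr_Rintegral_le (F G : T -> R) :
  mu.-integrable D (EFin \o F) -> mu.-integrable D (EFin \o G) ->
  (forall x, D x -> `|F x| <= G x) ->
  `|\int[mu]_(x in D) F x| <= \int[mu]_(x in D) G x.
Proof.
move=> iF iG FG; apply: le_trans (le_normr_Rintegral mD iF) _.
by apply: le_Rintegral => //; exact: integrable_norm.
Qed.

End Rintegral_bounds.

Lemma measurable_fun_if_le {d} {T : measurableType d} {R : realType} (F G : T -> R) :
  measurable_fun setT F -> measurable_fun setT G ->
  measurable_fun setT (fun x => if F x <= G x then 1 else 0 : R).
Proof. by move=> mF mG; apply: measurable_fun_ifT => //; exact: measurable_fun_ler. Qed.

Lemma normr_mul_if10 {R : numDomainType} (x : R) (b : bool) :
  `|x * (if b then 1 else 0)| <= `|x|.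
Proof. by case: b; rewrite ?mulr1 ?mulr0 ?normr0. Qed.

Section segment_integrals.
Context {R : realType}.
Local Notation mu := (@lebesgue_measure R).
Variables a b : R.
Let I := `[a, b]%classic : set R.
Let mI : measurable I. Proof. exact: measurable_itv. Qed.

Lemma bounded_integrable_segment (g : R -> R) (M : R) :
  measurable_fun I g -> (forall x, x \in `[a, b] -> `|g x| <= M) ->
  mu.-integrable I (EFin \o g).
Proof.
move=> mg gM; apply: measurable_bounded_integrable => //.
  exact/compact_finite_measure/segment_compact.
by exists M; split; rewrite ?num_real// => y /ltW My x /gM /le_trans; apply.
Qed.

Lemma continuous_bounded_segment (k : R -> R) : {within I, continuous k} ->
  exists M, forall x, x \in `[a, b] -> `|k x| <= M.
Proof.
move=> ck; have [M [_ kM]] := compact_bounded (continuous_compact ck (@segment_compact _ a b)).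
exists (`|M| + 1) => x xI; apply: kM; last by exists x.
by rewrite (le_lt_trans (ler_norm M)) ?ltrDl.
Qed.

Section segment_Fubini.
Variables (M : R) (phi : R * R -> R).
Hypothesis mphi : measurable_fun setT phi.
Hypothesis phiM : forall x y, x \in `[a, b] -> y \in `[a, b] -> `|phi (x, y)| <= M.

Let Phi := (EFin \o phi) \_ (I `*` I).

Let integrable_Phi : (mu \x mu)%E.-integrable setT Phi.
Proof.
apply: (integrable_mkcond (mu := (mu \x mu)%E) (EFin \o phi) (measurableX mI mI)).1.
apply: measurable_bounded_integrable => //; first exact: measurableX.
- have muI : (mu I < +oo)%E by exact/compact_finite_measure/segment_compact.
  set II := (X in (X < _)%E).
  have -> : II = (mu I * mu I)%E by apply: product_measure1E.
  by rewrite lte_mul_pinfty// ge0_fin_numE.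
- exact: measurable_funTS.
- exists M; split; rewrite ?num_real// => y My [x t] [xI tI] /=.
  by apply: le_trans (ltW My); apply: phiM.
Qed.

Let integrable_section1 x : x \in `[a, b] ->
  mu.-integrable I (EFin \o (fun y => phi (x, y))).
Proof.
move=> xI; apply: (bounded_integrable_segment _ M) => [|y yI]; last exact: phiM.
by apply: measurable_funTS; have := measurable_fun_pair2 x mphi; apply.
Qed.

Let integrable_section2 y : y \in `[a, b] ->
  mu.-integrable I (EFin \o (fun x => phi (x, y))).
Proof.
move=> yI; apply: (bounded_integrable_segment _ M) => [|x xI]; last exact: phiM.
by apply: measurable_funTS; have := measurable_fun_pair1 y mphi; apply.
Qed.

Let Phi_section1 x : (\int[mu]_y Phi (x, y))%E =
  ((fun x => (\int[mu]_(y in I) phi (x, y))%:E) \_ I) x.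
Proof.
rewrite patchE; case: ifPn => xI.
  rewrite -integral_EFin_Rintegral//; last exact: integrable_section1 (set_mem xI).
  by rewrite integral_mkcond; apply: eq_integral => y _; rewrite /Phi !patchE in_setX xI.
rewrite -[RHS](integral0 mu setT); apply: eq_integral => y _.
by rewrite /Phi patchE in_setX (negbTE xI).
Qed.

Let Phi_section2 y : (\int[mu]_x Phi (x, y))%E =
  ((fun y => (\int[mu]_(x in I) phi (x, y))%:E) \_ I) y.
Proof.
rewrite patchE; case: ifPn => yI.
  rewrite -integral_EFin_Rintegral//; last exact: integrable_section2 (set_mem yI).
  by rewrite integral_mkcond; apply: eq_integral => x _; rewrite /Phi !patchE in_setX yI andbT.
rewrite -[RHS](integral0 mu setT); apply: eq_integral => x _.
by rewrite /Phi patchE in_setX (negbTE yI) andbF.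
Qed.

Lemma Rintegral_segment_swap :
  \int[mu]_(x in I) \int[mu]_(y in I) phi (x, y) =
  \int[mu]_(y in I) \int[mu]_(x in I) phi (x, y).
Proof.
transitivity (fine (\int[mu]_x \int[mu]_y Phi (x, y)))%E.
  rewrite [LHS]/Rintegral integral_mkcond; congr fine.
  by apply: eq_integral => x _; rewrite Phi_section1.
rewrite (Fubini integrable_Phi) [RHS]/Rintegral integral_mkcond; congr fine.
by apply: eq_integral => y _; rewrite Phi_section2.
Qed.

End segment_Fubini.

Lemma Rintegral_segment_indic_swap (g k : R -> R) (Mg Mk : R) :
  measurable_fun setT g -> measurable_fun setT k ->
  (forall t, t \in `[a, b] -> `|g t| <= Mg) ->
  (forall x, x \in `[a, b] -> `|k x| <= Mk) ->
  \int[mu]_(x in I) ((\int[mu]_(t in I) (g t * (if x <= t then 1 else 0))) * k x) =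
  \int[mu]_(t in I) (g t * \int[mu]_(x in I) (k x * (if x <= t then 1 else 0))).
Proof.
move=> mg mk gM kM.
have ig x : mu.-integrable I (EFin \o (fun t => g t * (if x <= t then 1 else 0))).
  apply: (bounded_integrable_segment _ Mg).
    by apply/measurable_funTS/measurable_funM => //; exact: measurable_fun_if_le.
  by move=> t tI; rewrite (le_trans (normr_mul_if10 _ _))// gM.
have ik t : mu.-integrable I (EFin \o (fun x => k x * (if x <= t then 1 else 0))).
  apply: (bounded_integrable_segment _ Mk).
    by apply/measurable_funTS/measurable_funM => //; exact: measurable_fun_if_le.
  by move=> x xI; rewrite (le_trans (normr_mul_if10 _ _))// kM.
pose phi p := g p.2 * (if p.1 <= p.2 then 1 else 0) * k p.1.
have mphi : measurable_fun setT phi.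
  apply: measurable_funM; last exact: measurableT_comp mk measurable_fst.
  apply: measurable_funM; first exact: measurableT_comp mg measurable_snd.
  exact: measurable_fun_if_le measurable_fst measurable_snd.
have phiM x t : x \in `[a, b] -> t \in `[a, b] -> `|phi (x, t)| <= Mg * Mk.
  by move=> xI tI; rewrite normrM ler_pM// ?kM// (le_trans (normr_mul_if10 _ _))// gM.
transitivity (\int[mu]_(x in I) \int[mu]_(t in I) phi (x, t)).
  by apply: eq_Rintegral => x _; rewrite -RintegralZr.
rewrite (Rintegral_segment_swap _ _ mphi phiM); apply: eq_Rintegral => t _.
rewrite -RintegralZl//; apply: eq_Rintegral => x _.
by rewrite /phi /= mulrCA mulrC.
Qed.

Lemma Rintegral_segment_indic_le (k : R -> R) (t : R) : t \in `[a, b] ->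
  \int[mu]_(x in I) (k x * (if x <= t then 1 else 0)) = \int[mu]_(x in `[a, t]) k x.
Proof.
rewrite in_itv /= => /andP[le_at le_tb].
transitivity (\int[mu]_(x in I `&` [set x | x <= t]) k x).
  rewrite Rintegral_mkcondr; apply: eq_Rintegral => x _.
  rewrite patchE; have [xt|tx] := leP x t; first by rewrite mem_set ?mulr1.
  by rewrite memNset ?mulr0// => /= xt; move: tx; rewrite ltNge xt.
congr Rintegral; apply/seteqP; split => x /=; rewrite /I /= !in_itv /=.
  by move=> [/andP[-> _] ->].
by move=> /andP[-> xt]; rewrite (le_trans xt le_tb).
Qed.

Lemma Rintegral_segment_derive_indic_le (H dH : R -> R) (t : R) :
  {within I, continuous H} -> {within I, continuous dH} ->
  (forall x, x \in `]a, b[ -> is_derive x 1 H (dH x)) -> t \in `[a, b] ->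
  \int[mu]_(x in I) (dH x * (if x <= t then 1 else 0)) = H t - H a.
Proof.
move=> cH cdH H_dH tI; rewrite Rintegral_segment_indic_le//.
move: tI; rewrite in_itv /= => /andP[le_at le_tb].
have [->|neq_ta] := eqVneq t a.
  by rewrite set_itv1 /Rintegral integral_set1 subrr.
have {neq_ta le_at} lt_at : a < t by rewrite lt_neqAle eq_sym neq_ta le_at.
have sub : `[a, t] `<=` I.
  by move=> x /=; rewrite /I /= !in_itv /= => /andP[-> xt]; rewrite (le_trans xt le_tb).
have dHt x : x \in `]a, t[ -> is_derive x 1 H (dH x).
  by rewrite in_itv /= => /andP[ax xt]; apply: H_dH; rewrite in_itv /= ax (lt_le_trans xt).
rewrite /Rintegral (@continuous_FTC2 _ dH H a t lt_at (continuous_subspaceW sub cdH))//.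
- have /(continuous_within_itvP _ lt_at) [_ Ha Ht] := continuous_subspaceW sub cH.
  by split => // x /dHt /@ex_derive.
- by move=> x /dHt dHx; rewrite derive1E derive_val.
Qed.

End segment_integrals.

Section density.
Context {R : realType}.
Local Notation mu := (@lebesgue_measure R).
Variables (a b Cp : R) (p : R -> R).
Hypothesis mp : measurable_fun setT p.
Hypothesis p_bounded : forall x, x \in `[a, b] -> 0 <= p x <= Cp.
Hypothesis p_int1 : \int[mu]_(x in `[a, b]) p x = 1.

Definition mean := \int[mu]_(x in `[a, b]) (x * p x).

Definition tail_moment (x : R) :=
  \int[mu]_(t in `[a, b]) ((t - mean) * (if x <= t then 1 else 0) * p t).

Definition tail_prob (x : R) :=
  \int[mu]_(t in `[a, b]) ((if x <= t then 1 else 0) * p t).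

Lemma integrable_mul_density (g : R -> R) (M : R) : measurable_fun `[a, b] g ->
  (forall x, x \in `[a, b] -> `|g x| <= M) ->
  mu.-integrable `[a, b] (EFin \o (fun x => g x * p x)).
Proof.
move=> mg gM; apply: (bounded_integrable_segment a b _ (M * Cp)).
  by apply: measurable_funM => //; exact: measurable_funTS.
move=> x xI; have /andP[p0 pC] := p_bounded _ xI.
by rewrite normrM (ger0_norm p0) ler_pM// ?gM.
Qed.

Let K := `|a| + `|b| + `|mean|.

Let normr_segment_le t : t \in `[a, b] -> `|t| <= `|a| + `|b|.
Proof.
rewrite in_itv /= => /andP[le_at le_tb]; rewrite ler_norml.
have := ler_norm b; have := ler_norm (- a); rewrite normrN.
by have := normr_ge0 a; have := normr_ge0 b; lra.
Qed.

Let normr_centered_le t : t \in `[a, b] -> `|t - mean| <= K.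
Proof. by move=> tI; rewrite (le_trans (ler_normB _ _))// lerD2r normr_segment_le. Qed.

Let measurable_centered : measurable_fun setT (fun t : R => t - mean).
Proof. exact: measurable_funB. Qed.

Lemma integrable_centered :
  mu.-integrable `[a, b] (EFin \o (fun t => (t - mean) * p t)).
Proof. exact: (integrable_mul_density _ K (measurable_funTS measurable_centered)). Qed.

Lemma integrable_centered_mul (g : R -> R) (M : R) : measurable_fun `[a, b] g ->
  (forall x, x \in `[a, b] -> `|g x| <= M) ->
  mu.-integrable `[a, b] (EFin \o (fun x => (x - mean) * g x * p x)).
Proof.
move=> mg gM; apply: (integrable_mul_density _ (K * M)).
  exact: measurable_funM (measurable_funTS measurable_centered) mg.
by move=> x xI; rewrite normrM ler_pM ?normr_centered_le ?gM.
Qed.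

Let integrable_density : mu.-integrable `[a, b] (EFin \o p).
Proof.
apply: eq_integrable (integrable_mul_density (cst 1) 1 _ _) => //.
- by move=> x _ /=; rewrite mul1r.
- by move=> x _; rewrite normr1.
Qed.

Lemma Rintegral_centered : \int[mu]_(t in `[a, b]) ((t - mean) * p t) = 0.
Proof.
have ix : mu.-integrable `[a, b] (EFin \o (fun t => t * p t)).
  by apply: (integrable_mul_density id (`|a| + `|b|)).
under eq_Rintegral do rewrite mulrBl.
rewrite RintegralB//; last by apply: (integrable_mul_density (cst mean) `|mean|) => // t _.
by rewrite RintegralZl// p_int1 mulr1 subrr.
Qed.

Let integrable_indic_density (F G : R -> R) : measurable_fun setT F -> measurable_fun setT G ->
  mu.-integrable `[a, b] (EFin \o (fun t => (if F t <= G t then 1 else 0) * p t)).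
Proof.
move=> mF mG; apply: (integrable_mul_density _ 1).
  exact/measurable_funTS/measurable_fun_if_le.
by move=> t _; case: ifP; rewrite ?normr1 ?normr0.
Qed.

(* The two tails overlap only at the Lebesgue-null point [x]. *)
Lemma tail_prob_add_cdf x :
  tail_prob x + \int[mu]_(t in `[a, b]) ((if t <= x then 1 else 0) * p t) = 1.
Proof.
rewrite -RintegralD//; try exact: integrable_indic_density.
rewrite -[RHS]p_int1; congr fine.
apply: (eq_integral_off_null mu [set x]) => // [|t _ /eqP tx]; first exact: lebesgue_measure_set1.
congr EFin; case: (ltgtP x t) tx => // _ _; rewrite ?mul0r ?mul1r ?add0r ?addr0//.
Qed.

Lemma tail_prob_le1 x : tail_prob x <= 1.
Proof.
rewrite -(tail_prob_add_cdf x) lerDl Rintegral_ge0// => t tI.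
by have /andP[p0 _] := p_bounded _ tI; case: ifP; rewrite ?mul1r ?mul0r.
Qed.

Let normr_tail_moment_le x : `|tail_moment x| <= K * tail_prob x.
Proof.
rewrite -RintegralZl//; last exact: integrable_indic_density.
apply: normr_Rintegral_le => //.
- apply: (integrable_mul_density _ K).
    exact/measurable_funTS/measurable_funM/measurable_fun_if_le.
  by move=> t tI; rewrite (le_trans (normr_mul_if10 _ _))// normr_centered_le.
- exact/integrableZl_EFin/integrable_indic_density.
move=> t tI; have /andP[p0 _] := p_bounded _ tI.
rewrite normrM (ger0_norm p0) mulrA ler_wpM2r//.
by case: ifP; rewrite ?mulr1 ?mulr0 ?normr0// normr_centered_le.
Qed.

Lemma tail_moment_eq0 x : tail_prob x = 0 -> tail_moment x = 0.
Proof.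
by move=> P0; apply/eqP; rewrite -normr_le0 -(mulr0 K) -P0 normr_tail_moment_le.
Qed.

Lemma normr_tail_moment_bounded : exists M, forall x, `|tail_moment x| <= M.
Proof.
exists K => x; rewrite (le_trans (normr_tail_moment_le x))// ler_piMr//.
  by rewrite !addr_ge0.
exact: tail_prob_le1.
Qed.

Lemma measurable_tail_moment : measurable_fun setT tail_moment.
Proof.
apply: (measurableT_comp (f := fine)) => //.
apply: (measurable_fun_param_integral mu _
  (fun q : R * R => (q.2 - mean) * (if q.1 <= q.2 then 1 else 0) * p q.2) (measurable_itv _)).
apply: measurable_funM; last exact: measurableT_comp mp measurable_snd.
apply: measurable_funM; first exact: measurable_funB measurable_snd _.
exact: measurable_fun_if_le measurable_fst measurable_snd.
Qed.

Lemma Rintegral_tail_moment_derive (H dH : R -> R) :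
  measurable_fun setT dH ->
  {within `[a, b], continuous H} -> {within `[a, b], continuous dH} ->
  (forall x, x \in `]a, b[ -> is_derive x 1 H (dH x)) ->
  \int[mu]_(x in `[a, b]) (tail_moment x * dH x) =
  \int[mu]_(x in `[a, b]) ((x - mean) * H x * p x).
Proof.
move=> mdH cH cdH H_dH; have [MdH dHM] := continuous_bounded_segment _ _ _ cdH.
have ic := integrable_centered.
transitivity (\int[mu]_(x in `[a, b]) ((\int[mu]_(t in `[a, b])
    ((t - mean) * p t * (if x <= t then 1 else 0))) * dH x)).
  by apply: eq_Rintegral => x _; congr (_ * _); apply: eq_Rintegral => t _; rewrite mulrAC.
rewrite (Rintegral_segment_indic_swap a b _ _ (K * Cp) MdH) //; last first.
- move=> t tI; have /andP[p0 pC] := p_bounded _ tI.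
  by rewrite normrM (ger0_norm p0) ler_pM// normr_centered_le.
- exact: measurable_funM.
transitivity (\int[mu]_(t in `[a, b]) ((t - mean) * H t * p t - H a * ((t - mean) * p t))).
  apply: eq_Rintegral => t tI.
  by rewrite (Rintegral_segment_derive_indic_le _ _ _ _ _ cH cdH H_dH (set_mem tI)); ring.
rewrite RintegralB//; first by rewrite RintegralZl// Rintegral_centered mulr0 subr0.
- have [MH HM] := continuous_bounded_segment _ _ _ cH.
  by apply: (integrable_centered_mul _ MH _ HM); exact: subspace_continuous_measurable_fun.
- exact: integrableZl_EFin.
Qed.

Lemma integrable_centered_sq :
  mu.-integrable `[a, b] (EFin \o (fun x => (x - mean) ^+ 2 * p x)).
Proof.
apply: (integrable_mul_density _ (K ^+ 2)); first exact/measurable_funTS/measurable_funX.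
by move=> t tI; rewrite normrX lerXn2r ?nnegrE ?addr_ge0 ?normr_centered_le.
Qed.

Lemma Rintegral_tail_moment :
  \int[mu]_(x in `[a, b]) tail_moment x = \int[mu]_(x in `[a, b]) ((x - mean) ^+ 2 * p x).
Proof.
have ic := integrable_centered.
transitivity (\int[mu]_(x in `[a, b]) (tail_moment x * 1)).
  by apply: eq_Rintegral => x _; rewrite mulr1.
rewrite (Rintegral_tail_moment_derive (fun x => x) (fun=> 1)) //; first last.
- by apply: continuous_subspaceT => x; exact: cvg_cst.
- by apply: continuous_subspaceT => x; exact: cvg_id.
transitivity (\int[mu]_(x in `[a, b]) ((x - mean) ^+ 2 * p x + mean * ((x - mean) * p x))).
  by apply: eq_Rintegral => x _; ring.
rewrite RintegralD//; last exact: integrableZl_EFin.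
  by rewrite RintegralZl// Rintegral_centered mulr0 addr0.
exact: integrable_centered_sq.
Qed.

End density.

Section model.
Context {R : realType} {dW dU : measure_display}
  {TW : measurableType dW} {TU : measurableType dU}.
Variables (nu : R.-pker TW ~> TU) (a b : R) (f : TW -> R -> R).
Local Notation mu := (@lebesgue_measure R).

Lemma condE_of_X (g : R -> R) w :
  condE a b f nu (fun x _ => g x) w = \int[mu]_(x in `[a, b]) (g x * f w x).
Proof. by rewrite /condE /condEe integral_cst// prob_kernel mule1. Qed.

Section fixed_w.
Variables (w : TW) (cf Cf : R).
Hypothesis mfw : measurable_fun setT (f w).
Hypothesis fw_int1 : (\int[mu]_(x in `[a, b]) (f w x)%:E = 1)%E.
Hypothesis cf_gt0 : 0 < cf.
Hypothesis fw_bounded : forall x, x \in `[a, b] -> cf <= f w x <= Cf.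
Hypothesis v0_gt0 : 0 < v0 a b f nu w.

Let fw_ge0_bounded x : x \in `[a, b] -> 0 <= f w x <= Cf.
Proof. by move=> /fw_bounded /andP[cfx ->]; rewrite (le_trans (ltW cf_gt0)). Qed.

Let fw_Rint1 : \int[mu]_(x in `[a, b]) f w x = 1.
Proof. by rewrite /Rintegral fw_int1. Qed.

Lemma e0_mean : e0 a b f nu w = mean a b (f w).
Proof. exact: condE_of_X. Qed.

Lemma v0_variance :
  v0 a b f nu w = \int[mu]_(x in `[a, b]) ((x - mean a b (f w)) ^+ 2 * f w x).
Proof. by rewrite /v0 condE_of_X e0_mean. Qed.

(* If P(X >= x | W = w) = 0, the conditional mean in [condE_tail] is the junk
   value [_ / 0 = 0], and the tail moment vanishes as well. *)
Lemma omega_num_tail_moment x : omega_num a b f nu w x = tail_moment a b (f w) x.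
Proof.
rewrite /omega_num /condE_tail /cdfXW !condE_of_X e0_mean.
have <- : tail_prob a b (f w) x = 1 - \int[mu]_(t in `[a, b]) ((if t <= x then 1 else 0) * f w t).
  by apply/eqP; rewrite eq_sym subr_eq (tail_prob_add_cdf _ _ _ _ mfw fw_ge0_bounded fw_Rint1).
rewrite -/(tail_moment a b (f w) x) -/(tail_prob a b (f w) x).
have [P0|P0] := eqVneq (tail_prob a b (f w) x) 0; last by rewrite divfK.
by rewrite P0 mulr0 (tail_moment_eq0 _ _ _ _ mfw fw_ge0_bounded).
Qed.

Lemma Rintegral_omega_num :
  \int[mu]_(x in `[a, b]) omega_num a b f nu w x = v0 a b f nu w.
Proof.
rewrite v0_variance -(Rintegral_tail_moment _ _ _ _ mfw fw_ge0_bounded fw_Rint1).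
by apply: eq_Rintegral => x _; rewrite omega_num_tail_moment.
Qed.

Section fixed_u.
Variables (h dh : R -> TU -> R) (u : TU).
Hypothesis mhu : measurable_fun setT (fun x => h x u).
Hypothesis mdhu : measurable_fun setT (fun x => dh x u).
Hypothesis chu : {within `[a, b], continuous (fun x => h x u)}.
Hypothesis cdhu : {within `[a, b], continuous (fun x => dh x u)}.
Hypothesis dhu : forall x, x \in `]a, b[ -> is_derive x 1 (fun t => h t u) (dh x u).

Lemma integrable_cov_integrand :
  mu.-integrable `[a, b] (EFin \o (fun x => (x - e0 a b f nu w) * h x u * f w x)).
Proof.
have [Mh hM] := continuous_bounded_segment _ _ _ chu.
rewrite e0_mean.
exact: (integrable_centered_mul _ _ _ _ mfw fw_ge0_bounded _ Mh (measurable_funTS mhu) hM).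
Qed.

Lemma integral_omega_dh :
  (\int[mu]_(x in `[a, b]) (omega a b f nu w x * dh x u * f w x)%:E =
   ((v0 a b f nu w)^-1 *
      \int[mu]_(x in `[a, b]) ((x - e0 a b f nu w) * h x u * f w x))%:E)%E.
Proof.
have [Mt tM] := normr_tail_moment_bounded _ _ _ _ mfw fw_ge0_bounded fw_Rint1.
have [Mk kM] := continuous_bounded_segment _ _ _ cdhu.
have i_tdh : mu.-integrable `[a, b]
    (EFin \o (fun x => tail_moment a b (f w) x * dh x u)).
  apply: (bounded_integrable_segment _ _ _ (Mt * Mk)).
    by apply: measurable_funTS; apply: measurable_funM => //; exact: measurable_tail_moment.
  by move=> x xI; rewrite normrM ler_pM ?kM.
transitivity (\int[mu]_(x in `[a, b])
    ((v0 a b f nu w)^-1 * (tail_moment a b (f w) x * dh x u))%:E)%E.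
  apply: eq_integral => x /set_mem xI; congr EFin.
  rewrite /omega Rintegral_omega_num omega_num_tail_moment.
  have /andP[cfx _] := fw_bounded _ xI.
  have fx0 : f w x != 0 by rewrite gt_eqF// (lt_le_trans cf_gt0).
  by field; rewrite fx0 gt_eqF.
rewrite integral_EFin_Rintegral//; last exact: integrableZl_EFin.
rewrite RintegralZl// e0_mean.
by rewrite (Rintegral_tail_moment_derive _ _ _ _ mfw fw_ge0_bounded fw_Rint1).
Qed.

Lemma integral_covXY_integrand (c : R) :
  (\int[mu]_(x in `[a, b]) ((x - e0 a b f nu w) * (h x u - c) * f w x)%:E =
   (\int[mu]_(x in `[a, b]) ((x - e0 a b f nu w) * h x u * f w x))%:E)%E.
Proof.
transitivity (\int[mu]_(x in `[a, b])
    ((x - e0 a b f nu w) * h x u * f w x - c * ((x - e0 a b f nu w) * f w x))%:E)%E.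
  by apply: eq_integral => x _; congr EFin; ring.
have i1 := integrable_centered _ _ _ _ mfw fw_ge0_bounded.
rewrite -e0_mean in i1; have icov := integrable_cov_integrand.
rewrite integral_EFin_Rintegral//; last exact/integrableB_EFin/integrableZl_EFin.
rewrite RintegralB//; last exact: integrableZl_EFin.
rewrite RintegralZl// e0_mean.
by rewrite (Rintegral_centered _ _ _ _ mfw fw_ge0_bounded fw_Rint1) mulr0 subr0.
Qed.

End fixed_u.

Section kernel_integral.
Variables (h dh : R -> TU -> R) (SU : set TU).
Hypothesis mSU : measurable SU.
Hypothesis nuSU : nu w SU = 1%E.
Hypothesis mh : measurable_fun setT (fun q : R * TU => h q.1 q.2).
Hypothesis mdh : measurable_fun setT (fun q : R * TU => dh q.1 q.2).
Hypothesis h_C1 : forall u, SU u ->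
  {within `[a, b], continuous (fun x => h x u)} /\
  {within `[a, b], continuous (fun x => dh x u)} /\
  (forall x, x \in `]a, b[ -> is_derive x 1 (fun t => h t u) (dh x u)).
Hypothesis h_sq_int : (condEe a b f nu (fun x u => (h x u) ^+ 2)%R w < +oo)%E.

Let nu_notSU : nu w (~` SU) = 0%E.
Proof. by apply: measure_setC_eq0 => //; exact: prob_kernel. Qed.

Let psi u := (\int[mu]_(x in `[a, b]) ((x - e0 a b f nu w) * h x u * f w x))%:E.

Let hsq u := (\int[mu]_(x in `[a, b]) ((h x u) ^+ 2 * f w x)%:E)%E.

Let measurable_swap_fun (k : R -> TU -> R) :
  measurable_fun setT (fun q : R * TU => k q.1 q.2) ->
  measurable_fun setT (fun q : TU * R => k q.2 q.1).
Proof. by move=> mk; exact: measurableT_comp mk (@measurable_swap _ _ TU R). Qed.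

Let measurable_section (k : R -> TU -> R) u :
  measurable_fun setT (fun q : R * TU => k q.1 q.2) -> measurable_fun setT (fun x => k x u).
Proof. by move=> mk; have := measurable_fun_pair1 u mk. Qed.

Let measurable_psi : measurable_fun setT psi.
Proof.
apply/measurable_EFinP/(measurableT_comp (f := fine)) => //.
apply: (measurable_fun_param_integral mu _
  (fun q : TU * R => (q.2 - e0 a b f nu w) * h q.2 q.1 * f w q.2) (measurable_itv _)).
apply: measurable_funM; last exact: measurableT_comp mfw measurable_snd.
apply: measurable_funM; last exact: measurable_swap_fun.
exact: measurable_funB measurable_snd _.
Qed.

Let measurable_hsq : measurable_fun setT hsq.
Proof.
apply: (measurable_fun_param_integral mu _
  (fun q : TU * R => (h q.2 q.1) ^+ 2 * f w q.2) (measurable_itv _)).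
apply: measurable_funM; last exact: measurableT_comp mfw measurable_snd.
by apply: measurable_funX; exact: measurable_swap_fun.
Qed.

Let psi_le u : SU u -> (`|psi u| <= (v0 a b f nu w)%:E + hsq u)%E.
Proof.
move=> SUu; have [chu _] := h_C1 _ SUu; have [Mh hM] := continuous_bounded_segment _ _ _ chu.
have mhu := measurable_section _ u mh.
have ih2 : mu.-integrable `[a, b] (EFin \o (fun x => (h x u) ^+ 2 * f w x)).
  apply: (integrable_mul_density _ _ _ _ mfw fw_ge0_bounded _ (Mh ^+ 2)).
    exact/measurable_funTS/measurable_funX.
  move=> x xI; rewrite normrX lerXn2r ?nnegrE ?hM//.
  exact: le_trans (normr_ge0 _) (hM x xI).
rewrite /psi /hsq integral_EFin_Rintegral// -EFinD lee_fin v0_variance -e0_mean.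
have ie2 := integrable_centered_sq _ _ _ _ mfw fw_ge0_bounded.
rewrite -e0_mean in ie2; rewrite -RintegralD//.
apply: normr_Rintegral_le => //; first exact: integrable_cov_integrand.
  exact: integrableD_EFin.
move=> x xI; have /andP[fx0 _] := fw_ge0_bounded _ xI.
by rewrite -mulrDl normrM (ger0_norm fx0) ler_wpM2r// normrM_le_sqr.
Qed.

Let integrable_psi : (nu w).-integrable setT psi.
Proof.
apply/integrableP; split => //.
have hsq_ge0 u : (0 <= hsq u)%E.
  apply: integral_ge0 => x xI; have /andP[fx0 _] := fw_ge0_bounded _ xI.
  by rewrite lee_fin mulr_ge0 ?sqr_ge0.
apply: (@le_lt_trans _ _ (\int[nu w]_u ((v0 a b f nu w)%:E + hsq u))%E).
  apply: (ge0_le_integral_off_null _ _ (measurableC mSU) nu_notSU) => // u.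
    by rewrite adde_ge0// lee_fin ltW.
  by move=> /contrapT; exact: psi_le.
rewrite ge0_integralD//; last by move=> u _; rewrite lee_fin ltW.
by rewrite integral_cst// prob_kernel mule1 lte_add_pinfty// ltry.
Qed.

Lemma b0_omega_integral : (b0 a b f nu h w)%:E =
  (\int[nu w]_u \int[mu]_(x in `[a, b]) (omega a b f nu w x * dh x u * f w x)%:E)%E.
Proof.
have covE : covXY a b f nu h w = fine (\int[nu w]_u psi u)%E.
  rewrite /covXY /condE /condEe; congr fine.
  apply: (eq_integral_off_null _ _ (measurableC mSU) nu_notSU) => u _ /contrapT SUu.
  have [chu _] := h_C1 _ SUu.
  exact: (integral_covXY_integrand _ _ (measurable_section _ u mh) chu).
rewrite (eq_integral_off_null _ _ (measurableC mSU) nu_notSU _ _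
  (fun u => ((v0 a b f nu w)^-1)%:E * psi u)%E); last first.
  move=> u _ /contrapT SUu; have [chu [cdhu dhu]] := h_C1 _ SUu.
  by rewrite integral_omega_dh ?EFinM//; exact: measurable_section.
rewrite integralZl// /b0 covE EFinM fineK//; exact: integrable_fin_num.
Qed.

End kernel_integral.

End fixed_w.
End model.

Theorem proposition2 (R : realType) (dW dU : measure_display)
  (TW : measurableType dW) (TU : measurableType dU)
  (mu : probability TW R) (nu : R.-pker TW ~> TU)
  (SW : set TW) (SU : set TU)
  (a b : R) (f : TW -> R -> R) (h : R -> TU -> R) (dh : R -> TU -> R)
  (kappa cf Cf : R) :
  (* supports of W and U (sets of full probability) *)
  measurable SW -> mu SW = 1%E ->
  measurable SU -> (forall w, SW w -> nu w SU = 1%E) ->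
  (* (i) X continuous with bounded support [a,b]; density f w of X | W = w *)
  a < b ->
  measurable_fun setT (fun p : TW * R => f p.1 p.2) ->
  (forall w, SW w ->
     (\int[lebesgue_measure]_(x in `[a, b]) (f w x)%:E)%E = 1%E) ->
  (* (ii) density bounded and bounded away from zero on W x X *)
  0 < cf -> (forall w x, SW w -> x \in `[a, b] -> cf <= f w x <= Cf) ->
  (* (iii) Y = h(X,U), h measurable, C^1 in x on [a,b] with derivative dh *)
  measurable_fun setT (fun p : R * TU => h p.1 p.2) ->
  measurable_fun setT (fun p : R * TU => dh p.1 p.2) ->
  (forall u, SU u ->
     {within `[a, b], continuous (fun x => h x u)} /\
     {within `[a, b], continuous (fun x => dh x u)} /\
     (forall x, x \in `]a, b[ -> is_derive x 1 (fun t => h t u) (dh x u))) ->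
  (* second moments: E[Y^2 | W = w] < oo and E[X^2 | W = w] < oo *)
  (forall w, SW w -> (condEe a b f nu (fun x u => (h x u) ^+ 2)%R w < +oo)%E) ->
  (forall w, SW w -> (condEe a b f nu (fun x _ => x ^+ 2)%R w < +oo)%E) ->
  (* v_0(w) >= kappa > 0 *)
  0 < kappa -> (forall w, SW w -> kappa <= v0 a b f nu w) ->
  (* well-definedness of beta_0 = E[b_0(W)] and of the right-hand side *)
  (\int[mu]_w (`|b0 a b f nu h w|)%:E < +oo)%E ->
  (\int[mu]_w \int[nu w]_u \int[lebesgue_measure]_(x in `[a, b])
      (`|omega a b f nu w x * dh x u| * f w x)%:E < +oo)%E ->
  (* conclusion: beta_0 = E[omega(W,X) dh(X,U)/dx] *)
  (\int[mu]_w (b0 a b f nu h w)%:E =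
   \int[mu]_w \int[nu w]_u \int[lebesgue_measure]_(x in `[a, b])
      (omega a b f nu w x * dh x u * f w x)%:E)%E.
Proof.
(* The identity holds for every w in SW. *)
move=> mSW muSW mSU nuSU _ mf f_int1 cf_gt0 f_bounded mh mdh h_C1 h_sq_int _
  kappa_gt0 v0_ge _ _.
have mu_notSW : mu (~` SW) = 0%E by apply: measure_setC_eq0 => //; exact: probability_setT.
apply: (eq_integral_off_null _ _ (measurableC mSW) mu_notSW) => w _ /contrapT SWw.
have mfw : measurable_fun setT (f w) by have := measurable_fun_pair2 w mf.
apply: (b0_omega_integral _ _ _ _ _ _ _ mfw (f_int1 _ SWw) cf_gt0 (f_bounded _ ^~ SWw)
  _ _ _ _ mSU (nuSU _ SWw) mh mdh h_C1 (h_sq_int _ SWw)).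
exact: lt_le_trans kappa_gt0 (v0_ge _ SWw).
Qed.
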